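(* Let $Y$ be a topological quandle with the underlying set and quandle operation described below, but with the indiscrete topology. Then $\bar{H}^{1}_{Q}(Y)=\mathbb{Z}^{2}$.
   Context: Setting: For a topological quandle $X$, $C_n(X)$ is the free abelian group generated by the singular $n$-simplices $\sigma:\Delta^n\to X$. We write $\sigma_{[x_1,\dots,x_{n+1}]}$ for a simplex whose $i$-th vertex maps to $x_i$. The boundary map is $\partial_n(\sigma_{[x_1,\dots,x_{n+1}]})=\sum_{i=2}^{n+1}(-1)^i(\sigma_{[x_1,\dots,\hat{x_i},\dots,x_{n+1}]}-\sigma_{[x_1\triangleright x_i,\dots,x_{i-1}\triangleright x_i,\hat{x_i},\dots,x_{n+1}]})$. $\bar{C}^R_n(X)$ is the quotient of $C_n(X)$ that identifies two $n$-simplices whenever they have the same vertices. $\bar{C}^D_n(X)$ is the subcomplex generated by the simplices $\sigma_{[x_1,\dots,x_{n+1}]}$ with $x_i=x_{i+1}$ for some $i$, for $n\ge1$; it is $0$ for $n=0$. Then $\bar{C}^Q_n(X)=\bar{C}^R_n(X)/\bar{C}^D_n(X)$. The group $\bar{H}^n_Q(X)$ is the $n$-th cohomology of $\mathrm{Hom}(\bar{C}^Q_*(X),\mathbb{Z})$. The underlying quandle is $\{1,2,3\}$ with - $1\triangleright j=1$ for all $j$, - $2\triangleright1=3$, $2\triangleright2=2$, $2\triangleright3=2$, - $3\triangleright1=2$, $3\triangleright2=3$, $3\triangleright3=3$. This is the operation table $M$ with rows $(1,1,1),(3,2,2),(2,3,3)$. *)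

From HB Require Import structures.
From mathcomp Require Import all_boot all_order all_algebra.
From mathcomp Require Import all_classical all_reals all_analysis.
From mathcomp Require Import Rstruct Rstruct_topology.

Unset Printing Implicit Defensive.

Import Order.TTheory GRing.Theory Num.Theory.
Local Open Scope classical_set_scope.
Local Open Scope ring_scope.

(* Elements 1,2,3 of the paper are encoded as the ordinals 0,1,2 of 'I_3.   *)
Notation QY := 'I_3 (only parsing).

(* operation table M with rows (1,1,1),(3,2,2),(2,3,3); (x |> y) = M[x][y] *)
Definition qop (x y : QY) : QY :=
  match nat_of_ord x, nat_of_ord y with
  | 0, _ => inord 0
  | 1, 0 => inord 2
  | 1, _ => inord 1
  | _, 0 => inord 1
  | _, _ => inord 2
  end.

Definition indiscrete_open (Y : Type) : set (set Y) :=
  [set U | U = set0 \/ U = setT].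

Definition std_simplex (n : nat) : set 'rV[Rdefinitions.R]_n.+1 :=
  [set v | (forall j, 0 <= v ord0 j) /\ \sum_j v ord0 j = 1].
Arguments std_simplex n : clear implicits.

Definition vertex {n : nat} (i : 'I_n.+1) : 'rV[Rdefinitions.R]_n.+1 :=
  \row_j (i == j)%:R.

Definition simplex_open (n : nat) (A : set 'rV[Rdefinitions.R]_n.+1) : Prop :=
  exists V : set 'rV[Rdefinitions.R]_n.+1, open V /\ std_simplex n `&` A = std_simplex n `&` V.
Arguments simplex_open n A : clear implicits.

(* sigma (only its restriction to Delta^n matters) is a continuous map
   Delta^n -> Y, where Y carries the topology whose open sets are openY. *)
Definition singular_simplex {Y : Type} (openY : set (set Y)) (n : nat)
    (sigma : 'rV[Rdefinitions.R]_n.+1 -> Y) : Prop :=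
  forall U, openY U -> simplex_open n (sigma @^-1` U).

(* A vertex tuple (x_1,...,x_{n+1}) is the vertex tuple of some singular
   n-simplex sigma_[x_1,...,x_{n+1}]; such tuples index a basis of C^R_n. *)
Definition realizable {Y : Type} (openY : set (set Y)) {n : nat}
    (t : {ffun 'I_n.+1 -> Y}) : Prop :=
  exists sigma, singular_simplex openY n sigma /\ forall i, sigma (vertex i) = t i.

(* degenerate: x_i = x_{i+1} for some i (the generators of C^D_n; none for n=0) *)
Definition degenerate {Y : eqType} {n : nat} (t : {ffun 'I_n.+1 -> Y}) : Prop :=
  exists i j : 'I_n.+1, (nat_of_ord j = (nat_of_ord i).+1)%N /\ t i = t j.

Section Complex.
Variables (Y : finType) (op : Y -> Y -> Y).

Definition face {n : nat} (k : 'I_n.+2) (t : {ffun 'I_n.+2 -> Y}) :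
    {ffun 'I_n.+1 -> Y} := [ffun j => t (lift k j)].

Definition tface {n : nat} (k : 'I_n.+2) (t : {ffun 'I_n.+2 -> Y}) :
    {ffun 'I_n.+1 -> Y} :=
  [ffun j => if (nat_of_ord j < nat_of_ord k)%N then op (t (lift k j)) (t k)
             else t (lift k j)].

(* (delta f)(sigma) = f(partial sigma), with (0-based k = i-1)
   partial sigma = sum_{i=2}^{n+2} (-1)^i (d_i sigma - d'_i sigma). *)
Definition cobound {n : nat} (f : {ffun 'I_n.+1 -> Y} -> int)
    (t : {ffun 'I_n.+2 -> Y}) : int :=
  \sum_(k : 'I_n.+2 | k != ord0)
     (-1) ^+ (nat_of_ord k).+1 * (f (face k t) - f (tface k t)).

Variable openY : set (set Y).

(* An n-cochain of the normalized complex Hom(C^Q_n(Y), Z): an integer-valued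
   function on the basis of C^R_n (realizable vertex tuples) vanishing on
   C^D_n; by convention it is 0 on non-realizable tuples. *)
Definition cochainQ (n : nat) (f : {ffun 'I_n.+1 -> Y} -> int) : Prop :=
  forall t, (~ realizable openY t \/ degenerate t) -> f t = 0.

Definition cocycleQ (n : nat) (f : {ffun 'I_n.+1 -> Y} -> int) : Prop :=
  cochainQ n f /\ forall t : {ffun 'I_n.+2 -> Y}, realizable openY t ->
     cobound f t = 0.

Definition coboundaryQ (n : nat) (f : {ffun 'I_n.+2 -> Y} -> int) : Prop :=
  exists g : {ffun 'I_n.+1 -> Y} -> int, cochainQ n g /\
    forall t : {ffun 'I_n.+2 -> Y}, realizable openY t -> f t = cobound g t.

(* H^{n+1}_Q = Z^{n+1}/B^{n+1} is isomorphic to Z^2 : there is a map from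
   (n+1)-cocycles onto Z x Z, additive on cocycles, whose kernel on the
   cocycles is exactly the coboundaries. *)
Definition H_Q_iso_Z2 (n : nat) : Prop :=
  exists phi : ({ffun 'I_n.+2 -> Y} -> int) -> (int * int)%type,
    (forall f g, cocycleQ n.+1 f -> cocycleQ n.+1 g ->
        phi (fun t => f t + g t) = phi f + phi g) /\
    (forall z, exists f, cocycleQ n.+1 f /\ phi f = z) /\
    (forall f, cocycleQ n.+1 f -> (phi f = 0 <-> coboundaryQ n f)).

End Complex.

(* A map into an indiscrete space is continuous, so every vertex tuple spans a
   singular simplex and the complex is the purely algebraic normalized quandle
   complex. A normalized 1-cochain is a function f on pairs with f(x,x) = 0; the
   cocycle condition at the triples (1,2,1), (2,1,2) and (2,1,3) forces
   f(2,3) = f(3,2) = 0 and f(1,3) = f(1,2), and conversely every such f is a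
   cocycle, so the cocycles form Z^3 with coordinates f(1,2), f(2,1), f(3,1).
   The coboundaries g(x) - g(x |> y) are exactly the f with f(1,2) = 0 and
   f(2,1) + f(3,1) = 0, hence f |-> (f(1,2), f(2,1) + f(3,1)) identifies the
   first cohomology with Z^2. *)
From mathcomp Require Import all_boot all_order all_algebra.
From mathcomp Require Import all_classical all_reals all_analysis.
From mathcomp Require Import Rstruct Rstruct_topology.
From mathcomp Require Import ring zify.
Import GRing.Theory Num.Theory.

Set Implicit Arguments.
Unset Strict Implicit.
Local Open Scope ring_scope.

Section VertexTuples.
Variable Y : Type.

Definition vtuple1 (x : Y) : {ffun 'I_1 -> Y} := [ffun=> x].

Definition vtuple2 (x y : Y) : {ffun 'I_2 -> Y} :=
  [ffun i => if val i == 0%N then x else y].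

Definition vtuple3 (x y z : Y) : {ffun 'I_3 -> Y} :=
  [ffun i => if val i == 0%N then x else if val i == 1%N then y else z].

Lemma vtuple2_eta (t : {ffun 'I_2 -> Y}) : t = vtuple2 (t ord0) (t ord_max).
Proof. by apply/ffunP => -[[|[|m]] lt_m]; rewrite ffunE //; congr (t _); apply: val_inj. Qed.

Lemma vtuple3_eta (t : {ffun 'I_3 -> Y}) :
  t = vtuple3 (t ord0) (t (inord 1)) (t ord_max).
Proof.
apply/ffunP => -[[|[|[|m]]] lt_m]; rewrite ffunE //; congr (t _); apply: val_inj => //.
by rewrite /= inordK.
Qed.

Lemma vtuple2E0 x y : vtuple2 x y ord0 = x. Proof. by rewrite ffunE. Qed.
Lemma vtuple2E1 x y : vtuple2 x y ord_max = y. Proof. by rewrite ffunE. Qed.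

End VertexTuples.

Lemma vertex_inj n : injective (@vertex n).
Proof.
move=> i j /matrixP /(_ ord0 i); rewrite !mxE eqxx.
by case: eqP => // _ /eqP; rewrite mulr0n mulr1n oner_eq0.
Qed.

Lemma realizable_indiscrete (Y : Type) n (t : {ffun 'I_n.+1 -> Y}) :
  realizable (indiscrete_open Y) t.
Proof.
exists (fun v => if [pick i | v == vertex i] is Some i then t i else t ord0); split.
  move=> U [->|->].
    by exists set0; rewrite preimage_set0; split => //; exact: open0.
  by exists setT; rewrite preimage_setT; split => //; exact: openT.
by move=> i; case: pickP => [j /eqP/vertex_inj -> //|/(_ i)]; rewrite eqxx.
Qed.

Lemma degenerate1P (Y : eqType) (t : {ffun 'I_2 -> Y}) :
  degenerate t <-> t ord0 = t ord_max.
Proof.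
split=> [[[[|[|?]] lt_i] [[[|[|?]] lt_j] [//= _]]]|t01]; last by exists ord0, ord_max.
have -> : Ordinal lt_i = ord0 by apply: val_inj.
by have -> : Ordinal lt_j = ord_max by apply: val_inj.
Qed.

Lemma nondegenerate0 (Y : eqType) (t : {ffun 'I_1 -> Y}) : ~ degenerate t.
Proof. by move=> [[[|?] ?] [[[|?] ?] []]]. Qed.

Section IndiscreteComplex.
Variables (Y : finType) (op : Y -> Y -> Y).
Let openY := indiscrete_open Y.

Lemma cobound0E (g : {ffun 'I_1 -> Y} -> int) x y :
  cobound _ op g (vtuple2 x y) = g (vtuple1 x) - g (vtuple1 (op x y)).
Proof.
rewrite /cobound big_mkcond !big_ord_recl big_ord0 /=.
have -> : face _ (lift ord0 ord0) (vtuple2 x y) = vtuple1 x.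
  by apply/ffunP => -[[|?] ?]; rewrite !ffunE.
have -> : tface _ op (lift ord0 ord0) (vtuple2 x y) = vtuple1 (op x y).
  by apply/ffunP => -[[|?] ?]; rewrite !ffunE.
by rewrite /=; ring.
Qed.

Lemma cobound1E (f : {ffun 'I_2 -> Y} -> int) x y z :
  cobound _ op f (vtuple3 x y z) =
  f (vtuple2 x z) - f (vtuple2 (op x y) z) - f (vtuple2 x y)
    + f (vtuple2 (op x z) (op y z)).
Proof.
rewrite /cobound big_mkcond !big_ord_recl big_ord0 /=.
have -> : face _ (lift ord0 ord0) (vtuple3 x y z) = vtuple2 x z.
  by apply/ffunP => -[[|[|?]] ?]; rewrite !ffunE.
have -> : tface _ op (lift ord0 ord0) (vtuple3 x y z) = vtuple2 (op x y) z.
  by apply/ffunP => -[[|[|?]] ?]; rewrite !ffunE.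
have -> : face _ (lift ord0 (lift ord0 ord0)) (vtuple3 x y z) = vtuple2 x y.
  by apply/ffunP => -[[|[|?]] ?]; rewrite !ffunE.
have -> : tface _ op (lift ord0 (lift ord0 ord0)) (vtuple3 x y z)
          = vtuple2 (op x z) (op y z).
  by apply/ffunP => -[[|[|?]] ?]; rewrite !ffunE.
by rewrite /=; ring.
Qed.

Lemma cochainQ0_indiscrete (g : {ffun 'I_1 -> Y} -> int) : cochainQ _ openY 0 g.
Proof. by move=> t [/(_ (realizable_indiscrete t))|/nondegenerate0]. Qed.

Lemma cochainQ1_indiscreteP (f : {ffun 'I_2 -> Y} -> int) :
  cochainQ _ openY 1 f <-> forall x, f (vtuple2 x x) = 0.
Proof.
split=> [f_deg x|f_diag t [/(_ (realizable_indiscrete t))//|/degenerate1P t01]].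
  by apply: f_deg; right; apply/degenerate1P; rewrite vtuple2E0 vtuple2E1.
by rewrite (vtuple2_eta t) t01.
Qed.

Lemma cocycleQ1_indiscreteP (f : {ffun 'I_2 -> Y} -> int) :
  cocycleQ _ op openY 1 f <->
  (forall x, f (vtuple2 x x) = 0) /\
  (forall x y z, cobound _ op f (vtuple3 x y z) = 0).
Proof.
rewrite /cocycleQ cochainQ1_indiscreteP.
split=> -[f_diag f_cocycle]; split=> //.
  by move=> x y z; apply/f_cocycle/realizable_indiscrete.
by move=> t _; rewrite (vtuple3_eta t).
Qed.

Lemma coboundaryQ0_indiscreteP (f : {ffun 'I_2 -> Y} -> int) :
  coboundaryQ _ op openY 0 f <->
  exists g : {ffun 'I_1 -> Y} -> int,
    forall x y, f (vtuple2 x y) = g (vtuple1 x) - g (vtuple1 (op x y)).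
Proof.
split=> -[g].
  by case=> _ f_eq; exists g => x y; rewrite f_eq ?cobound0E //; apply: realizable_indiscrete.
move=> f_eq; exists g; split=> [|t _]; first exact: cochainQ0_indiscrete.
by rewrite (vtuple2_eta t) f_eq cobound0E.
Qed.

End IndiscreteComplex.

Definition q1 : 'I_3 := @Ordinal 3 0 isT.
Definition q2 : 'I_3 := @Ordinal 3 1 isT.
Definition q3 : 'I_3 := @Ordinal 3 2 isT.

Lemma I3P (x : 'I_3) : [\/ x = q1, x = q2 | x = q3].
Proof.
by case: x => [[|[|[|?]]] ?] //; [constructor 1|constructor 2|constructor 3]; apply: val_inj.
Qed.

Lemma qop1l y : qop q1 y = q1.
Proof. by apply: val_inj; rewrite /= inordK; case: y => [[|[|]]]. Qed.
Lemma qopxx x : qop x x = x.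
Proof. by case: (I3P x) => ->; apply: val_inj; rewrite /= inordK. Qed.
Lemma qop21 : qop q2 q1 = q3. Proof. by apply: val_inj; rewrite /= inordK. Qed.
Lemma qop23 : qop q2 q3 = q2. Proof. by apply: val_inj; rewrite /= inordK. Qed.
Lemma qop31 : qop q3 q1 = q2. Proof. by apply: val_inj; rewrite /= inordK. Qed.
Lemma qop32 : qop q3 q2 = q3. Proof. by apply: val_inj; rewrite /= inordK. Qed.
Definition qopE := (qop1l, qopxx, qop21, qop23, qop31, qop32).

Notation Yind := (indiscrete_open 'I_3).

Lemma cocycleQ1_values f : cocycleQ _ qop Yind 1 f ->
  [/\ f (vtuple2 q2 q3) = 0, f (vtuple2 q3 q2) = 0
    & f (vtuple2 q1 q3) = f (vtuple2 q1 q2)].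
Proof.
case/cocycleQ1_indiscreteP=> f_diag f_cocycle.
move: (f_cocycle q1 q2 q1) (f_cocycle q2 q1 q2) (f_cocycle q2 q1 q3).
(* [/=] unfolds [Finite.sort 'I_3] to ['I_3], so that [lia] sees equal atoms. *)
by rewrite !cobound1E !qopE !f_diag /= => ? ? ?; split; lia.
Qed.

Definition H1_coord (f : {ffun 'I_2 -> 'I_3} -> int) : int * int :=
  (f (vtuple2 q1 q2), f (vtuple2 q2 q1) + f (vtuple2 q3 q1)).

Lemma H1_coordD f g :
  H1_coord (fun t => f t + g t) = H1_coord f + H1_coord g.
Proof. by rewrite /H1_coord; congr pair => /=; ring. Qed.

Definition cocycle_of (z : int * int) (t : {ffun 'I_2 -> 'I_3}) : int :=
  if t ord0 == q1 then (if t ord_max == q1 then 0 else z.1)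
  else if (t ord0 == q2) && (t ord_max == q1) then z.2 else 0.

Lemma cocycle_ofP z : cocycleQ _ qop Yind 1 (cocycle_of z).
Proof.
apply/cocycleQ1_indiscreteP; split=> [x|x y w].
  by rewrite /cocycle_of !vtuple2E0 !vtuple2E1; case: (I3P x) => ->.
rewrite cobound1E /cocycle_of !vtuple2E0 !vtuple2E1.
by case: (I3P x) => ->; case: (I3P y) => ->; case: (I3P w) => ->; rewrite !qopE /=; ring.
Qed.

Lemma H1_coord_cocycle_of z : H1_coord (cocycle_of z) = z.
Proof. by case: z => a b; rewrite /H1_coord /cocycle_of !vtuple2E0 !vtuple2E1 /= addr0. Qed.

Lemma H1_coord_coboundary f :
  coboundaryQ _ qop Yind 0 f -> H1_coord f = 0.
Proof.
case/coboundaryQ0_indiscreteP=> g f_eq.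
by rewrite /H1_coord !f_eq !qopE; congr pair => /=; ring.
Qed.

Lemma H1_coord_eq0_coboundary f : cocycleQ _ qop Yind 1 f ->
  H1_coord f = 0 -> coboundaryQ _ qop Yind 0 f.
Proof.
move=> f_cocycle [f12 f21_f31].
have /cocycleQ1_indiscreteP[f_diag _] := f_cocycle.
have [f23 f32 f13] := cocycleQ1_values f_cocycle.
apply/coboundaryQ0_indiscreteP.
exists (fun t => if t ord0 == q2 then f (vtuple2 q2 q1) else 0) => x y.
rewrite !ffunE; case: (I3P x) => ->; case: (I3P y) => ->;
  rewrite ?f_diag ?qopE //= ?f23 ?f32 ?f13 ?f12; lia.
Qed.

Theorem mainTheorem16 : H_Q_iso_Z2 QY qop (indiscrete_open QY) 0.
Proof.
exists H1_coord; split; [|split].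
- by move=> f g _ _; apply: H1_coordD.
- by move=> z; exists (cocycle_of z); split; [apply: cocycle_ofP|apply: H1_coord_cocycle_of].
- move=> f f_cocycle; split; first exact: H1_coord_eq0_coboundary.
  exact: H1_coord_coboundary.
Qed.
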